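(* Let $G$ be a group of nilpotency class two, minimally generated by elements $x_1,\ldots,x_m$ of orders $1<2^{r_1}\leq 2^{r_2}\leq\cdots\leq 2^{r_m}$, respectively, and assume that $m>1$ and $r_m=r_{m-1}+1$. If $G$ is capable, then for some $i\in\{1,\ldots,m-1\}$ the commutator $[x_m,x_i]$ has order exactly $2^{r_{m-1}}$.
   Context: A group $G$ is called capable if there exists a group $K$ such that $K/Z(K)\cong G$. Commutators are $[x,y]=x^{-1}y^{-1}xy$. *)

From HB Require Import structures.
From mathcomp Require Import all_boot all_fingroup all_solvable.
Set Implicit Arguments. Unset Strict Implicit. Unset Printing Implicit Defensive.
Import GroupScope.

(* A (finite) group G is capable if there is a group K (arbitrary, possibly
   infinite, given by carrier and operations) with K / Z(K) isomorphic to G.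
   We express the isomorphism K/Z(K) ~= G as a surjective homomorphism
   f : K -> G whose kernel is exactly the center Z(K). *)
Definition capable (gT : finGroupType) (G : {set gT}) : Prop :=
  exists (T : Type) (mul : T -> T -> T) (one : T) (inv : T -> T) (f : T -> gT),
    (forall a b c, mul a (mul b c) = mul (mul a b) c) /\
    (forall a, mul one a = a) /\
    (forall a, mul (inv a) a = one) /\
    (forall a b, f (mul a b) = f a * f b) /\
    (forall a, f a \in G) /\
    (forall g, g \in G -> exists a, f a = g) /\
    (forall a, f a = 1 <-> (forall b, mul a b = mul b a)).

From HB Require Import structures.
From mathcomp Require Import all_boot all_fingroup all_solvable.
From mathcomp Require boolp.
Import GroupScope.
Set Implicit Arguments.
Unset Strict Implicit.
Unset Printing Implicit Defensive.

(* Suppose no [~ x_m, x_i] has order 2^r_(m-1) and put n := 2^(r_(m-1) - 1).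
   As x_i^(2n) = 1 and commutators are central in G, every [~ x_m, x_i] has
   order dividing n.  Present G as K / Z(K) and lift x_m, x_i to y, b in K:
   there b^(2n) and [~ y, b]^n are central and [~ y, b] lies in the second
   centre, which forces y^(2n) to commute with b.  Hence y^(2n) is central,
   i.e. x_m^(2n) = 1, contradicting #[x_m] = 2^(r_(m-1) + 1) = 4n. *)

Definition central (H : groupType) (a : H) := forall b, commute a b.

Section ClassThreeIdentities.
Variable H : groupType.
Implicit Types a b c d y : H.

Lemma centralX a n : central a -> central (a ^+ n).
Proof. by move=> ca b; apply/commute_sym/commuteX/commute_sym. Qed.

Lemma gconjg_mulR a b : a ^ b = a * [~ a, b].
Proof. by rewrite commgEl mulKVg. Qed.

Lemma conjg_commute a c : commute a c -> a ^ c = a.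
Proof. by move=> cac; apply/conjg_fixP/commgP. Qed.

Lemma gcommMgJ a b c : [~ a * b, c] = [~ a, c] ^ b * [~ b, c].
Proof. by rewrite !commgEr conjgM mulgA -conjMg mulgK. Qed.

Lemma gcommXg a b n : commute a [~ a, b] -> [~ a ^+ n, b] = [~ a, b] ^+ n.
Proof.
move=> cab; elim: n => [|n IHn]; first exact: comm1g.
by rewrite !expgS gcommMgJ /conjg commuteX // mulKg IHn.
Qed.

Lemma gconjg_expg y b k : central [~ [~ y, b], b] ->
  y ^ (b ^+ k) = y * [~ y, b] ^+ k * [~ [~ y, b], b] ^+ 'C(k, 2).
Proof.
move=> cg; elim: k => [|k IHk]; first by rewrite !expg0 conjg1 !mulg1.
rewrite expgSr conjgM IHk !conjMg !conjXg (conjg_commute (cg b)).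
rewrite [y ^ b]gconjg_mulR [_ ^ b]gconjg_mulR expgMn; last exact/commute_sym/cg.
by rewrite binS bin1 expgS addnC !expgD !mulgA.
Qed.

Lemma gexpMg_Rmul y d k : central [~ d, y] ->
  (y * d) ^+ k = y ^+ k * d ^+ k * [~ d, y] ^+ 'C(k, 2).
Proof.
move=> ce; elim: k => [|k IHk]; first by rewrite !expg0 !mulg1.
have dyk : d ^+ k * y = y * d ^+ k * [~ d, y] ^+ k.
  by rewrite [LHS]commgC gcommXg //; apply/commute_sym/ce.
rewrite expgSr IHk binS bin1 addnC expgD -mulgA (centralX _ ce) !mulgA.
rewrite -(mulgA _ (d ^+ k)) dyk !mulgA -(mulgA _ _ d) (centralX _ ce d).
by rewrite !mulgA -expgSr -(mulgA _ (d ^+ k)) -expgSr.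
Qed.

Lemma commute_expg_double y b n :
  central (b ^+ (2 * n)) -> central ([~ y, b] ^+ n) ->
  (forall c, central [~ [~ y, b], c]) -> commute (y ^+ (2 * n)) b.
Proof.
move=> cb cdn cd; set d := [~ y, b].
(* Conjugation by the central b^(2n) kills d^(2n); then (y^(2n))^b = (y d)^(2n)
   = y^(2n). *)
have bin2_double : 'C(2 * n, 2) = (n * (2 * n).-1)%N.
  by rewrite bin2 -mulnA mul2n doubleK.
have dnR c : [~ d, c] ^+ n = 1.
  by rewrite -gcommXg; [apply/eqP/commgP/cdn | apply/commute_sym/cd].
have d2n : d ^+ (2 * n) = 1.
  have := conjg_commute (commute_sym (cb y)).
  rewrite gconjg_expg // -/d bin2_double [[~ d, b] ^+ _]expgM dnR expg1n.
  by rewrite mulg1 -{2}[y]mulg1 => /mulgI.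
apply/commgP/conjg_fixP.
rewrite conjXg gconjg_mulR -/d gexpMg_Rmul // d2n bin2_double.
by rewrite [[~ d, y] ^+ _]expgM dnR expg1n !mulg1.
Qed.

End ClassThreeIdentities.

Record group_law (T : Type) := GroupLaw {
  law_mul : T -> T -> T;
  law_one : T;
  law_inv : T -> T;
  law_mulA : associative law_mul;
  law_mul1 : left_id law_one law_mul;
  law_mulV : left_inverse law_one law_inv law_mul }.

(* Equality and choice on an arbitrary carrier are only classically available;
   groupType requires both. *)
Definition law_group T (L : group_law T) : Type := T.

HB.instance Definition _ T (L : group_law T) :=
  boolp.gen_eqMixin (law_group L).
HB.instance Definition _ T (L : group_law T) :=
  boolp.gen_choiceMixin (law_group L).

Section GroupLawTheory.
Variables (T : Type) (L : group_law T).
Local Notation mul := (law_mul L).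
Local Notation one := (law_one L).
Local Notation inv := (law_inv L).

Lemma law_mulgV : right_inverse one inv mul.
Proof.
move=> a; rewrite -[LHS](law_mul1 L) -(law_mulV L (inv a)) -law_mulA.
by rewrite (law_mulA _ (inv a)) law_mulV law_mul1.
Qed.

Lemma law_mulg1 : right_id one mul.
Proof. by move=> a; rewrite -(law_mulV L a) law_mulA law_mulgV law_mul1. Qed.

End GroupLawTheory.

HB.instance Definition _ T (L : group_law T) :=
  isGroup.Build (law_group L) (@law_mulA T L) (@law_mul1 T L) (@law_mulg1 T L)
    (@law_mulV T L) (@law_mulgV T L).

Section CentralQuotient.
Variables (K : groupType) (gT : finGroupType) (G : {group gT}) (f : K -> gT).
Hypothesis fM : {morph f : a b / a * b}.
Hypothesis f_into : forall a, f a \in G.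
Hypothesis f_onto : forall g, g \in G -> exists a, f a = g.
Hypothesis kerf : forall a, f a = 1 <-> central a.

Let f1 : f 1 = 1.
Proof. by apply: (mulgI (f 1)); rewrite -fM !mulg1. Qed.

HB.instance Definition _ := isUMagmaMorphism.Build K gT f (f1, fM).
Let fV : {morph f : a / a^-1} := gmulfV f.
Let fX n : {morph f : a / a ^+ n} := gmulfXn f n.
Let fR : {morph f : a b / [~ a, b]} := gmulfR f.

Lemma central_of_commute_lifts (S : {set gT}) (z : K) :
  G :=: <<S>> -> (forall k, f k \in S -> commute z k) -> central z.
Proof.
move=> defG czS.
pose lifts_commute g := forall k, f k = g -> commute z k.
pose A := [set g in G | boolp.asbool (lifts_commute g)].
have groupA : group_set A.
  apply/group_setP; split.
    by rewrite inE group1; apply/boolp.asboolP => k /kerf/(_ z)/commute_sym.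
  move=> g1 g2; rewrite !inE => /andP[g1G /boolp.asboolP z_g1].
  case/andP=> g2G /boolp.asboolP z_g2.
  rewrite groupM //; apply/boolp.asboolP => k fk.
  have [k1 fk1] := f_onto g1G.
  rewrite -(mulKVg k1 k); apply: commuteM; first exact: z_g1.
  by apply: z_g2; rewrite fM fV fk fk1 mulKg.
have sGA : G \subset group groupA.
  rewrite {1}defG gen_subG; apply/subsetP => s Ss.
  rewrite inE -[s \in G]/(s \in (G : {set gT})) defG mem_gen //=.
  by apply/boolp.asboolP => k fk; apply: czS; rewrite fk.
move=> k; have := subsetP sGA _ (f_into k).
by rewrite inE => /andP[_ /boolp.asboolP]; apply.
Qed.

Lemma commute_expg_double_lift (y b : K) n :
  [~ f y, f b] \in 'Z(G) -> f b ^+ (2 * n) = 1 -> [~ f y, f b] ^+ n = 1 ->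
  commute (y ^+ (2 * n)) b.
Proof.
move=> /centerP[_ cZ] fb fd; apply: commute_expg_double.
- by apply/kerf; rewrite fX.
- by apply/kerf; rewrite fX fR.
- by move=> c; apply/kerf; rewrite !fR; apply/eqP/commgP/cZ/f_into.
Qed.

Lemma central_quotient_expg_double (S : {set gT}) x n :
  G :=: <<S>> -> G^`(1) \subset 'Z(G) -> x \in S ->
  (forall s, s \in S -> s != x -> s ^+ (2 * n) = 1 /\ [~ x, s] ^+ n = 1) ->
  x ^+ (2 * n) = 1.
Proof.
move=> defG G'Z Sx Sord.
have xG : x \in G by rewrite defG mem_gen.
have [y fy] := f_onto xG.
suff /(kerf _).2 : central (y ^+ (2 * n)) by rewrite fX fy.
apply: (central_of_commute_lifts defG) => k Sfk.
have [fkx | nfkx] := eqVneq (f k) x.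
  have /kerf ker_yk : f (y^-1 * k) = 1 by rewrite fM fV fy fkx mulVg.
  rewrite -(mulKVg y k); apply: commuteM; first exact/commute_sym/commuteX.
  exact/commute_sym/ker_yk.
have [fk2n fxn] := Sord _ Sfk nfkx.
apply: commute_expg_double_lift; rewrite ?fy //.
by apply: (subsetP G'Z); rewrite mem_commg // -fy.
Qed.

End CentralQuotient.

Lemma capable_expg_double_eq1 (gT : finGroupType) (G : {group gT})
    (S : {set gT}) x n :
  capable G -> G :=: <<S>> -> G^`(1) \subset 'Z(G) -> x \in S ->
  (forall s, s \in S -> s != x -> s ^+ (2 * n) = 1 /\ [~ x, s] ^+ n = 1) ->
  x ^+ (2 * n) = 1.
Proof.
case=> T [mul [one [inv [f [mulA [mul1 [mulV [fM [f_into [f_onto kerf]]]]]]]]]].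
pose K := law_group (GroupLaw mulA mul1 mulV).
exact: (@central_quotient_expg_double K gT G f).
Qed.

Lemma dvdn_pexpS_neq p d n :
  prime p -> (d %| p ^ n.+1 -> d != p ^ n.+1 -> d %| p ^ n)%N.
Proof.
move=> p_pr /(dvdn_pfactor _ _ p_pr)[e le_e_n1 ->] ne_e.
rewrite dvdn_exp2l // -ltnS ltn_neqAle le_e_n1 andbT.
by apply: contraNneq ne_e => ->.
Qed.

Lemma commgX_pfactor_eq1 (gT : finGroupType) (G : {group gT}) (a b : gT) p k :
  prime p -> [~ a, b] \in 'Z(G) -> b \in G -> b ^+ (p ^ k.+1)%N = 1 ->
  #[[~ a, b]] != (p ^ k.+1)%N -> [~ a, b] ^+ (p ^ k)%N = 1.
Proof.
move=> p_pr /centerP[_ cZ] Gb bk ne_ord; apply/eqP; rewrite -order_dvdn.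
apply: dvdn_pexpS_neq ne_ord => //.
by rewrite order_dvdn -commgX ?bk ?commg1 //; apply/commute_sym/cZ.
Qed.

Theorem theorem2p3 (gT : finGroupType) (G : {group gT}) (m : nat)
    (x : nat -> gT) (r : nat -> nat) :
  nilpotent G -> nil_class G = 2 ->
  1 < m ->
  G :=: <<[set x (val i) | i : 'I_m]>> ->
  (forall j, j < m -> <<[set x (val i) | i : 'I_m & val i != j]>> != G) ->
  (forall i, i < m -> #[x i] = (2 ^ r i)%N) ->
  0 < r 0 ->
  (forall i j, i <= j -> j < m -> r i <= r j) ->
  r m.-1 = (r m.-2).+1 ->
  capable G ->
  exists i, i < m.-1 /\ #[[~ x m.-1, x i]] = (2 ^ r m.-2)%N.
Proof.
move=> _ cl2; case: m => [|[|m]] // _ /= defG _ ord r0_gt0 r_mono r_last cap.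
have [k rk] : exists k, r m = k.+1.
  by exists (r m).-1; rewrite prednK // (leq_trans r0_gt0) ?r_mono.
have [/existsP[i /eqP ord_i] | /existsPn no_i] :=
  boolP [exists i : 'I_m.+1, #[[~ x m.+1, x i]] == (2 ^ r m)%N].
  by exists i.
have G'Z : G^`(1) \subset 'Z(G) by rewrite -nil_class2 cl2.
have xG i : i < m.+2 -> x i \in G.
  by move=> lt_i; rewrite defG mem_gen //; apply/imsetP; exists (Ordinal lt_i).
suff : x m.+1 ^+ (2 * 2 ^ k)%N = 1.
  by move/eqP; rewrite -order_dvdn ord // r_last rk -expnS dvdn_Pexp2l // ltnn.
apply: (capable_expg_double_eq1 cap defG G'Z).
  by apply/imsetP; exists ord_max.
move=> _ /imsetP[i _ ->] ne_i; rewrite -expnS.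
have lt_i : i < m.+1.
  by rewrite ltn_neqAle -ltnS ltn_ord andbT; apply: contraNneq ne_i => ->.
have xik : x i ^+ (2 ^ k.+1)%N = 1.
  by apply/eqP; rewrite -order_dvdn ord // -rk dvdn_exp2l // r_mono.
split=> //; apply: commgX_pfactor_eq1 xik _ => //.
- by apply: (subsetP G'Z); rewrite mem_commg ?xG.
- exact: xG.
- by rewrite -rk; apply: (no_i (Ordinal lt_i)).
Qed.
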